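(* Let $(X,d)$ be a proper metric space (every bounded closed set is compact) and let $f:X\to\mathbb{R}$ be continuous with $s[f]:X\to\mathbb{R}$ continuous. Then for every $x\in X$ with $s[f](x)\neq0$ there exist $T>0$ and a $1$-Lipschitz curve $\gamma:[0,T]\to X$ with $\gamma(0)=x$ and \[ f(\gamma(t))=f(x)-\int_0^t s[f](\gamma(s))\,ds\quad\text{for all } t\in[0,T]. \]
   Context: Local slope: $s[f](\bar x):=\limsup_{y\to\bar x}\frac{\max\{f(\bar x)-f(y),0\}}{d(\bar x,y)}$, with $s[f](\bar x)=0$ if $\bar x$ is isolated. *)

From Stdlib Require Import Reals List.
From Coquelicot Require Import Coquelicot.
Open Scope R_scope.

Section Metric.
Context {X : Type} (d : X -> X -> R).

Definition is_metric : Prop :=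
  (forall x y, 0 <= d x y) /\
  (forall x y, d x y = 0 <-> x = y) /\
  (forall x y, d x y = d y x) /\
  (forall x y z, d x z <= d x y + d y z).

Definition m_open (U : X -> Prop) : Prop :=
  forall x, U x -> exists e, 0 < e /\ forall y, d x y < e -> U y.

Definition m_closed (K : X -> Prop) : Prop := m_open (fun x => ~ K x).

Definition m_bounded (K : X -> Prop) : Prop :=
  exists x0 r, forall x, K x -> d x0 x <= r.

Definition m_compact (K : X -> Prop) : Prop :=
  forall (I : Type) (U : I -> X -> Prop),
    (forall i, m_open (U i)) ->
    (forall x, K x -> exists i, U i x) ->
    exists l : list I, forall x, K x -> exists i, In i l /\ U i x.

Definition proper_metric : Prop :=
  forall K, m_bounded K -> m_closed K -> m_compact K.

Definition m_continuous (f : X -> R) : Prop :=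
  forall x e, 0 < e -> exists delta, 0 < delta /\
    forall y, d x y < delta -> Rabs (f y - f x) < e.

Definition m_isolated (x : X) : Prop :=
  exists delta, 0 < delta /\ forall y, d x y < delta -> y = x.

(* limsup_{y -> x} max(f x - f y, 0) / d(x,y)
   = inf_{delta > 0} sup_{0 < d(x,y) < delta} max(f x - f y, 0)/d(x,y)  (in Rbar) *)
Definition slope_limsup (f : X -> R) (x : X) : Rbar :=
  Rbar_glb (fun L => exists delta, 0 < delta /\
    L = Lub_Rbar (fun v => exists y, 0 < d x y < delta /\
                                     v = Rmax (f x - f y) 0 / d x y)).

Definition is_local_slope (f : X -> R) (x : X) (s : Rbar) : Prop :=
  (m_isolated x /\ s = Finite 0) \/ (~ m_isolated x /\ s = slope_limsup f x).

End Metric.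

From Stdlib Require Import Reals List Lra Lia ZArith Classical ClassicalEpsilon Cantor.
From Coquelicot Require Import Coquelicot.
Open Scope R_scope.

(* Minimizing movements.  Starting from x, jump repeatedly to a minimiser of f on the
   closed ball of radius h and interpolate the jumps at unit speed.  Where the slope
   exceeds a, such a jump lowers f by at least a h, because a minimiser of f + a d(z, .)
   on the ball must lie on its boundary.  So the discrete curves are 1-Lipschitz up to h
   and descend at rate almost s.  Properness and a diagonal argument give a pointwise
   limit gamma along a subsequence; gamma is 1-Lipschitz, the definition of the slope
   gives the right derivative of f o gamma at least -s(gamma), and the discrete descent
   together with the continuity of s gives at most -s(gamma).  A continuous function
   whose right derivative is continuous is the integral of it. *)

Definition is_right_derivative (F : R -> R) (u l : R) : Prop :=
  forall e, 0 < e -> exists del, 0 < del /\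
    forall tau, 0 < tau < del -> Rabs (F (u + tau) - F u - l * tau) <= e * tau.

Lemma right_derivative_opp F u l :
  is_right_derivative F u l -> is_right_derivative (fun v => - F v) u (- l).
Proof.
  intros HF e He. destruct (HF e He) as [del [Hdel HFdel]].
  exists del; split; [easy|]. intros tau Htau.
  replace (- F (u + tau) - - F u - - l * tau) with (- (F (u + tau) - F u - l * tau)) by ring.
  rewrite Rabs_Ropp. now apply HFdel.
Qed.

Lemma right_derivative_minus F G u l m :
  is_right_derivative F u l -> is_right_derivative G u m ->
  is_right_derivative (fun v => F v - G v) u (l - m).
Proof.
  intros HF HG e He.
  destruct (HF (e / 2)) as [d1 [Hd1 HF1]]; [lra|].
  destruct (HG (e / 2)) as [d2 [Hd2 HG2]]; [lra|].
  exists (Rmin d1 d2); split; [now apply Rmin_pos|]. intros tau Htau.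
  pose proof (Rmin_l d1 d2). pose proof (Rmin_r d1 d2).
  specialize (HF1 tau ltac:(lra)). specialize (HG2 tau ltac:(lra)).
  replace (F (u + tau) - G (u + tau) - (F u - G u) - (l - m) * tau)
    with ((F (u + tau) - F u - l * tau) - (G (u + tau) - G u - m * tau)) by ring.
  apply Rabs_le_between in HF1, HG2. apply Rabs_le_between. lra.
Qed.

Lemma derivable_pt_lim_right F u l :
  derivable_pt_lim F u l -> is_right_derivative F u l.
Proof.
  intros HF e He. destruct (HF e He) as [[del Hdel] HFdel].
  exists del; split; [easy|]. intros tau Htau.
  specialize (HFdel tau ltac:(lra) ltac:(simpl; rewrite Rabs_pos_eq; lra)).
  replace (F (u + tau) - F u - l * tau) with (((F (u + tau) - F u) / tau - l) * tau)
    by (field; lra).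
  rewrite Rabs_mult, (Rabs_pos_eq tau) by lra.
  apply Rmult_le_compat_r; lra.
Qed.

Lemma real_induction (P : R -> Prop) a b :
  a <= b -> P a ->
  (forall c, a < c <= b -> (forall w, a <= w < c -> P w) -> P c) ->
  (forall u, a <= u < b -> P u -> exists del, 0 < del /\ forall w, u < w < u + del -> P w) ->
  P b.
Proof.
  intros Hab Ha Hclosed Hopen.
  set (S := fun v => a <= v <= b /\ forall w, a <= w <= v -> P w).
  destruct (completeness S) as [c [Hub Hlub]].
  { exists b. intros v [Hv _]. lra. }
  { exists a. split; [lra|]. intros w Hw. now replace w with a by lra. }
  assert (Hac : a <= c).
  { apply Hub. split; [lra|]. intros w Hw. now replace w with a by lra. }
  assert (Hcb : c <= b) by (apply Hlub; intros v [Hv _]; lra).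
  assert (Hbelow : forall w, a <= w < c -> P w).
  { intros w Hw. apply NNPP. intros Hw'. enough (c <= w) by lra.
    apply Hlub. intros v [_ Hv]. apply Rnot_lt_le. intros Hwv. apply Hw', Hv. lra. }
  assert (Hupto : forall w, a <= w <= c -> P w).
  { intros w Hw. destruct (Req_dec w c) as [->|]; [|apply Hbelow; lra].
    destruct (Req_dec a c) as [<-|]; [easy|]. apply Hclosed; [lra|easy]. }
  destruct (Req_dec c b) as [<-|Hne]; [apply Hupto; lra|]. exfalso.
  destruct (Hopen c ltac:(lra) (Hupto c ltac:(lra))) as [del [Hdel Hstep]].
  set (v := c + Rmin del (b - c) / 2).
  pose proof (Rmin_l del (b - c)). pose proof (Rmin_r del (b - c)).
  assert (0 < Rmin del (b - c)) by (apply Rmin_pos; lra).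
  enough (S v) by (assert (v <= c) by (now apply Hub); unfold v in *; lra).
  split; [unfold v; lra|]. intros w Hw.
  destruct (Rle_dec w c); [apply Hupto; lra|]. apply Hstep. unfold v in Hw. lra.
Qed.

Lemma nonincreasing_of_right_dini (phi : R -> R) a b :
  a <= b -> (forall t, a < t <= b -> continuity_pt phi t) ->
  (forall u e, a <= u < b -> 0 < e -> exists del, 0 < del /\
     forall tau, 0 < tau < del -> phi (u + tau) - phi u <= e * tau) ->
  phi b <= phi a.
Proof.
  intros Hab Hc Hr. apply Rle_plus_epsilon. intros eta Heta.
  set (eps := eta / (b - a + 1)).
  assert (Heps : 0 < eps) by (apply Rdiv_lt_0_compat; lra).
  assert (eps * (b - a + 1) = eta) by (unfold eps; field; lra).
  enough (phi b - phi a <= eps * (b - a)) by lra.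
  apply (real_induction (fun w => phi w - phi a <= eps * (w - a)) a b); [easy|lra| |].
  - intros c Hac Hbelow. apply Rnot_lt_le. intros Hbad.
    set (gap := phi c - phi a - eps * (c - a)).
    destruct (Hc c Hac (gap / 2) ltac:(unfold gap; lra)) as [del [Hdel Hcont]].
    set (w := Rmax a (c - del / 2)).
    assert (a <= w) by apply Rmax_l. assert (c - del / 2 <= w) by apply Rmax_r.
    assert (w < c) by (apply Rmax_lub_lt; lra).
    assert (Hw_near : D_x no_cond c w /\ R_dist w c < del).
    { split; [split; [easy|lra]|]. unfold R_dist. rewrite Rabs_left; lra. }
    specialize (Hcont w Hw_near). simpl in Hcont. unfold R_dist in Hcont.
    apply Rabs_def2 in Hcont. specialize (Hbelow w ltac:(lra)).
    assert (eps * (w - a) <= eps * (c - a)) by (apply Rmult_le_compat_l; lra).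
    unfold gap in *. lra.
  - intros u Hu Hgood. destruct (Hr u eps Hu Heps) as [del [Hdel Hstep]].
    exists del. split; [easy|]. intros w Hw.
    specialize (Hstep (w - u) ltac:(lra)). replace (u + (w - u)) with w in Hstep by ring.
    lra.
Qed.

Lemma constant_of_zero_right_derivative (phi : R -> R) a b :
  a <= b -> (forall t, a < t <= b -> continuity_pt phi t) ->
  (forall u, a <= u < b -> is_right_derivative phi u 0) -> phi b = phi a.
Proof.
  intros Hab Hc Hd. apply Rle_antisym.
  - apply (nonincreasing_of_right_dini phi a b); [easy..|]. intros u e Hu He.
    destruct (Hd u Hu e He) as [del [Hdel Hnear]].
    exists del. split; [easy|]. intros tau Htau. specialize (Hnear tau Htau).
    pose proof (Rle_abs (phi (u + tau) - phi u - 0 * tau)). lra.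
  - enough (- phi b <= - phi a) by lra.
    apply (nonincreasing_of_right_dini (fun v => - phi v) a b); [easy| |].
    + intros t Ht. now apply continuity_pt_opp, Hc.
    + intros u e Hu He.
      destruct (right_derivative_opp _ _ _ (Hd u Hu) e He) as [del [Hdel Hnear]].
      exists del. split; [easy|]. intros tau Htau. specialize (Hnear tau Htau).
      pose proof (Rle_abs (- phi (u + tau) - - phi u - - 0 * tau)). lra.
Qed.

Lemma RInt_of_right_derivative (F g : R -> R) a b :
  a <= b -> (forall t, a < t <= b -> continuity_pt F t) -> (forall t, continuity_pt g t) ->
  (forall u, a <= u < b -> is_right_derivative F u (g u)) ->
  F b = F a + RInt g a b.
Proof.
  intros Hab HF Hg Hd.
  set (I := fun v => RInt g a v).
  assert (HI : forall v, derivable_pt_lim I v (g v)).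
  { intros v. apply is_derive_Reals, (is_derive_RInt g I a v).
    - apply filter_forall. intros w. apply (@RInt_correct R_CompleteNormedModule).
      apply (@ex_RInt_continuous R_CompleteNormedModule). intros z _.
      now apply continuity_pt_filterlim.
    - now apply continuity_pt_filterlim. }
  assert (E : F b - I b = F a - I a).
  { apply (constant_of_zero_right_derivative (fun v => F v - I v)); [easy| |].
    - intros t Ht. apply continuity_pt_minus; [now apply HF|].
      apply derivable_continuous_pt. exists (g t). apply HI.
    - intros u Hu. replace 0 with (g u - g u) by ring.
      apply right_derivative_minus; [now apply Hd|now apply derivable_pt_lim_right]. }
  unfold I in *. rewrite RInt_point in E. unfold zero in E; simpl in E. lra.
Qed.

Definition mesh (n : nat) : R := / INR (S n).

Lemma mesh_pos n : 0 < mesh n.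
Proof. apply Rinv_0_lt_compat, lt_0_INR. lia. Qed.

Lemma mesh_antitone m n : (m <= n)%nat -> mesh n <= mesh m.
Proof. intros Hmn. apply Rinv_le_contravar; [apply lt_0_INR; lia|apply le_INR; lia]. Qed.

Lemma mesh_small e : 0 < e -> exists N, mesh N < e.
Proof.
  intros He. destruct (archimed (/ e)) as [Hup _].
  assert (0 < / e) by now apply Rinv_0_lt_compat.
  assert (0 <= up (/ e))%Z by (apply le_IZR; simpl; lra).
  exists (Z.to_nat (up (/ e))). unfold mesh.
  rewrite S_INR, INR_IZR_INZ, Z2Nat.id by easy.
  rewrite <- (Rinv_inv e) at 2. apply Rinv_lt_contravar; [apply Rmult_lt_0_compat|]; lra.
Qed.


Definition grid_index (h t : R) : nat := Z.to_nat (Int_part (t / h)).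

Lemma grid_index_spec h t :
  0 < h -> 0 <= t -> INR (grid_index h t) * h <= t < INR (grid_index h t) * h + h.
Proof.
  intros Hh Ht. unfold grid_index. destruct (base_Int_part (t / h)) as [Hlo Hhi].
  assert (0 <= Int_part (t / h))%Z.
  { assert (0 <= t / h) by (apply Rdiv_le_0_compat; lra).
    apply Z.lt_succ_r, lt_IZR. rewrite succ_IZR. lra. }
  rewrite INR_IZR_INZ, Z2Nat.id by easy.
  assert (t / h * h = t) by (field; lra).
  set (q := t / h) in *. set (k := IZR (Int_part q)) in *. split; nra.
Qed.

Lemma grid_index_nonpos h t : 0 < h -> t <= 0 -> grid_index h t = 0%nat.
Proof.
  intros Hh Ht. unfold grid_index. destruct (base_Int_part (t / h)) as [Hlo _].
  assert (t / h <= 0).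
  { unfold Rdiv. assert (0 < / h) by now apply Rinv_0_lt_compat. nra. }
  assert (Int_part (t / h) <= 0)%Z by (apply le_IZR; lra). lia.
Qed.

Lemma grid_index_diff h t1 t2 : 0 < h -> t1 <= t2 ->
  (grid_index h t1 <= grid_index h t2)%nat /\
  (INR (grid_index h t2) - INR (grid_index h t1)) * h <= t2 - t1 + h /\
  (0 <= t1 -> t2 - t1 - h <= (INR (grid_index h t2) - INR (grid_index h t1)) * h).
Proof.
  intros Hh Ht.
  destruct (Rle_dec t1 0) as [Ht1|Ht1].
  - rewrite (grid_index_nonpos h t1 Hh Ht1). simpl.
    destruct (Rle_dec t2 0) as [Ht2|Ht2].
    + rewrite (grid_index_nonpos h t2 Hh Ht2). simpl. repeat split; intros; [lia|nra|nra].
    + pose proof (grid_index_spec h t2 Hh ltac:(lra)). repeat split; intros; [lia|nra|nra].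
  - pose proof (grid_index_spec h t1 Hh ltac:(lra)).
    pose proof (grid_index_spec h t2 Hh ltac:(lra)).
    assert (Hidx : INR (grid_index h t1) < INR (S (grid_index h t2))).
    { rewrite S_INR. apply (Rmult_lt_reg_r h); lra. }
    apply INR_lt in Hidx. repeat split; [lia|lra|lra].
Qed.

Definition dense_seq (m : nat) : R := let (i, k) := Cantor.of_nat m in INR i * mesh k - INR k.

Lemma dense_seq_dense t e : 0 < e -> exists m, Rabs (dense_seq m - t) < e.
Proof.
  intros He. destruct (mesh_small e He) as [k1 Hk1].
  destruct (archimed (Rabs t)) as [Hup _].
  assert (0 <= up (Rabs t))%Z by (apply le_IZR; pose proof (Rabs_pos t); lra).
  set (k := max k1 (Z.to_nat (up (Rabs t)))).
  assert (Hk : - t <= INR k).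
  { enough (Rabs t <= INR k) by (pose proof (Rabs_maj2 t); lra).
    apply Rle_trans with (INR (Z.to_nat (up (Rabs t)))); [|apply le_INR; lia].
    rewrite INR_IZR_INZ, Z2Nat.id by easy. lra. }
  pose proof (mesh_antitone k1 k ltac:(lia)).
  exists (Cantor.to_nat (grid_index (mesh k) (t + INR k), k)).
  unfold dense_seq. rewrite Cantor.cancel_of_to.
  destruct (grid_index_spec (mesh k) (t + INR k) (mesh_pos k)); [lra|].
  apply Rabs_def1; lra.
Qed.

Definition infinite_set (A : nat -> Prop) : Prop := forall N, exists n, (N <= n)%nat /\ A n.

Lemma increasing_selection (P : nat -> nat -> Prop) :
  (forall k, infinite_set (P k)) ->
  exists sigma : nat -> nat,
    (forall k, P k (sigma k)) /\ (forall j k, (j < k)%nat -> (sigma j < sigma k)%nat).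
Proof.
  intros HP.
  assert (next : forall k m, {n | (m < n)%nat /\ P k n}).
  { intros k m. apply constructive_indefinite_description.
    destruct (HP k (S m)) as [n [Hn HPn]]. exists n. split; [lia|easy]. }
  pose (sigma := fix sigma k := match k with
    | O => proj1_sig (next O O)
    | S k' => proj1_sig (next (S k') (sigma k')) end).
  assert (Hstep : forall k, (sigma k < sigma (S k))%nat)
    by (intros k; apply (proj2_sig (next _ _))).
  exists sigma. split.
  - intros [|k]; apply (proj2_sig (next _ _)).
  - intros j k Hjk. induction Hjk as [|k Hjk IH]; [apply Hstep|]. specialize (Hstep k). lia.
Qed.

Lemma strictly_increasing_ge (sigma : nat -> nat) :
  (forall j k, (j < k)%nat -> (sigma j < sigma k)%nat) -> forall k, (k <= sigma k)%nat.
Proof. intros Hincr k. induction k; [lia|]. specialize (Hincr k (S k) ltac:(lia)). lia. Qed.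

Lemma list_argmin {I : Type} (g : I -> R) (l : list I) :
  l <> nil -> exists i, In i l /\ forall j, In j l -> g i <= g j.
Proof.
  induction l as [|a l IH]; [easy|intros _].
  destruct l as [|b l].
  - exists a. split; [now left|]. intros j [<-|[]]. lra.
  - destruct (IH ltac:(easy)) as [i [Hi Hmin]].
    destruct (Rle_dec (g a) (g i)).
    + exists a. split; [now left|]. intros j [<-|Hj]; [lra|]. specialize (Hmin j Hj). lra.
    + exists i. split; [now right|]. intros j [<-|Hj]; [lra|auto].
Qed.

Section MetricSpace.
Context {X : Type} (d : X -> X -> R).
Hypothesis Hm : is_metric d.

Lemma dist_nonneg x y : 0 <= d x y. Proof. apply Hm. Qed.
Lemma dist_sym x y : d x y = d y x. Proof. apply Hm. Qed.
Lemma dist_triangle x y z : d x z <= d x y + d y z. Proof. apply Hm. Qed.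
Lemma dist_refl x : d x x = 0. Proof. now apply Hm. Qed.
Lemma dist_eq x y : d x y = 0 -> x = y. Proof. apply Hm. Qed.

Lemma not_isolated_near z :
  ~ m_isolated d z -> forall e, 0 < e -> exists y, 0 < d z y < e.
Proof.
  intros Hz e He. apply NNPP. intros Hno. apply Hz. exists e. split; [easy|].
  intros y Hy. apply dist_eq. rewrite dist_sym.
  destruct (Rle_lt_or_eq_dec _ _ (dist_nonneg z y)) as [Hpos|]; [|easy].
  exfalso. apply Hno. now exists y.
Qed.

Lemma m_open_ball z e : m_open d (fun w => d z w < e).
Proof.
  intros y Hy. exists (e - d z y). split; [lra|].
  intros w Hw. pose proof (dist_triangle z y w). lra.
Qed.

Lemma m_continuous_dist z : m_continuous d (d z).
Proof.
  intros x e He. exists e. split; [easy|]. intros y Hy.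
  pose proof (dist_triangle z x y). pose proof (dist_triangle z y x).
  rewrite (dist_sym y x) in *. apply Rabs_def1; lra.
Qed.

Definition cball (z : X) (r : R) : X -> Prop := fun y => d z y <= r.

Lemma m_closed_cball z r : m_closed d (cball z r).
Proof.
  intros y Hy. unfold cball in Hy. exists (d z y - r). split; [lra|].
  intros w Hw Hwr. unfold cball in Hwr.
  pose proof (dist_triangle z w y). rewrite (dist_sym w y) in *. lra.
Qed.

Definition converges (u : nat -> X) (p : X) : Prop :=
  forall e, 0 < e -> exists N, forall n, (N <= n)%nat -> d (u n) p < e.

Definition converges_along (B : nat -> Prop) (u : nat -> X) (p : X) : Prop :=
  forall e, 0 < e -> exists N, forall n, B n -> (N <= n)%nat -> d (u n) p < e.

Lemma compact_cluster_point K (u : nat -> X) (A : nat -> Prop) :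
  m_compact d K -> infinite_set A -> (forall n, A n -> K (u n)) ->
  exists p, forall e, 0 < e -> infinite_set (fun n => A n /\ d (u n) p < e).
Proof.
  intros HK HA HuK. apply NNPP. intros Hno.
  assert (Hfar : forall p, {eN : R * nat | 0 < fst eN /\
      forall n, (snd eN <= n)%nat -> A n -> fst eN <= d (u n) p}).
  { intros p. apply constructive_indefinite_description. apply NNPP. intros Hnear.
    apply Hno. exists p. intros e He N. apply NNPP. intros HN. apply Hnear.
    exists (e, N). split; [easy|]. intros n Hn HAn. apply Rnot_lt_le. intros Hlt.
    apply HN. now exists n. }
  set (rad p := fst (proj1_sig (Hfar p))). set (idx p := snd (proj1_sig (Hfar p))).
  destruct (HK X (fun p w => d p w < rad p)) as [l Hl].
  - intros p. apply m_open_ball.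
  - intros w _. exists w. rewrite dist_refl. apply (proj2_sig (Hfar w)).
  - destruct (HA (list_max (map idx l))) as [n [Hn HAn]].
    destruct (Hl (u n) (HuK n HAn)) as [p [Hp Hnear]].
    assert (Hidx : (idx p <= list_max (map idx l))%nat).
    { pose proof (proj1 (list_max_le (map idx l) _) (le_n _)) as Hall.
      rewrite Forall_forall in Hall. now apply Hall, in_map. }
    assert (Hfarp := proj2 (proj2_sig (Hfar p)) n ltac:(fold (idx p); lia) HAn).
    rewrite dist_sym in Hfarp. fold (rad p) in Hfarp. lra.
Qed.

Lemma compact_converging_subset K (u : nat -> X) (A : nat -> Prop) :
  m_compact d K -> infinite_set A -> (forall n, A n -> K (u n)) ->
  exists B, (forall n, B n -> A n) /\ infinite_set B /\ exists p, converges_along B u p.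
Proof.
  intros HK HA HuK. destruct (compact_cluster_point K u A HK HA HuK) as [p Hp].
  destruct (increasing_selection (fun k n => A n /\ d (u n) p < mesh k)) as [sigma [Hsel Hincr]].
  { intros k. apply Hp, mesh_pos. }
  exists (fun n => exists k, sigma k = n). split; [|split].
  - intros n [k <-]. apply Hsel.
  - intros N. exists (sigma N). split; [now apply strictly_increasing_ge|now exists N].
  - exists p. intros e He. destruct (mesh_small e He) as [k0 Hk0].
    exists (sigma k0). intros n [k <-] Hk.
    assert (Hk0k : (k0 <= k)%nat).
    { destruct (le_lt_dec k0 k) as [|Hlt]; [easy|]. specialize (Hincr _ _ Hlt). lia. }
    pose proof (mesh_antitone _ _ Hk0k). pose proof (proj2 (Hsel k)). lra.
Qed.

Lemma compact_diagonal_subsequence (K : nat -> X -> Prop) (u : nat -> nat -> X) :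
  (forall m, m_compact d (K m)) -> (forall m n, K m (u m n)) ->
  exists sigma : nat -> nat, (forall k, (k <= sigma k)%nat) /\
    forall m, exists p, converges (fun k => u m (sigma k)) p.
Proof.
  intros HK Hu.
  assert (refine : forall m (A : {A | infinite_set A}), {B : nat -> Prop |
      infinite_set B /\ (forall n, B n -> proj1_sig A n) /\ exists p, converges_along B (u m) p}).
  { intros m [A HA]. apply constructive_indefinite_description.
    destruct (compact_converging_subset (K m) (u m) A (HK m) HA (fun n _ => Hu m n))
      as [B HB].
    exists B. tauto. }
  pose (nested := fix nested m := match m with
    | O => exist infinite_set (fun _ => True) (fun N => ex_intro _ N (conj (le_n N) I))
    | S m' => exist infinite_set (proj1_sig (refine m' (nested m')))
                (proj1 (proj2_sig (refine m' (nested m')))) end).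
  assert (Hnested : forall m k, (m <= k)%nat ->
      forall n, proj1_sig (nested k) n -> proj1_sig (nested m) n).
  { intros m k Hmk. induction Hmk as [|k Hmk IH]; [easy|].
    intros n Hn. apply IH. exact (proj1 (proj2 (proj2_sig (refine k (nested k)))) n Hn). }
  destruct (increasing_selection (fun k n => proj1_sig (nested k) n)) as [sigma [Hsel Hincr]].
  { intros k. exact (proj2_sig (nested k)). }
  exists sigma. split; [now apply strictly_increasing_ge|]. intros m.
  destruct (proj2 (proj2 (proj2_sig (refine m (nested m))))) as [p Hp].
  exists p. intros e He. destruct (Hp e He) as [N HN].
  exists (max N (S m)). intros k Hk.
  pose proof (strictly_increasing_ge sigma Hincr k).
  apply HN; [|lia]. apply (Hnested (S m) k); [lia|]. apply Hsel.
Qed.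

Lemma compact_attains_min K (g : X -> R) z0 :
  m_compact d K -> K z0 -> m_continuous d g -> exists q, K q /\ forall y, K y -> g q <= g y.
Proof.
  intros HK Kz0 Hg. apply NNPP. intros Hno.
  destruct (HK {p | K p} (fun p w => g (proj1_sig p) < g w)) as [l Hl].
  - intros [p Kp] w Hw. simpl in Hw.
    destruct (Hg w (g w - g p)) as [del [Hdel Hnear]]; [lra|].
    exists del. split; [easy|]. intros y Hy. specialize (Hnear y Hy).
    apply Rabs_def2 in Hnear. simpl. lra.
  - intros w Kw. apply NNPP. intros Hnot. apply Hno. exists w. split; [easy|].
    intros y Ky. apply Rnot_lt_le. intros Hlt. apply Hnot. now exists (exist _ y Ky).
  - destruct (list_argmin (fun p : {p | K p} => g (proj1_sig p)) l) as [[q Kq] [Hq Hmin]].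
    + intros ->. now destruct (Hl z0 Kz0) as [i [[] _]].
    + destruct (Hl q Kq) as [i [Hi Hlt]]. specialize (Hmin i Hi). simpl in *. lra.
Qed.

Lemma m_continuous_plus (g1 g2 : X -> R) :
  m_continuous d g1 -> m_continuous d g2 -> m_continuous d (fun y => g1 y + g2 y).
Proof.
  intros H1 H2 x e He.
  destruct (H1 x (e / 2)) as [d1 [Hd1 Hg1]]; [lra|].
  destruct (H2 x (e / 2)) as [d2 [Hd2 Hg2]]; [lra|].
  exists (Rmin d1 d2). split; [now apply Rmin_pos|]. intros y Hy.
  pose proof (Rmin_l d1 d2). pose proof (Rmin_r d1 d2).
  specialize (Hg1 y ltac:(lra)). specialize (Hg2 y ltac:(lra)).
  apply Rabs_def2 in Hg1, Hg2. apply Rabs_def1; lra.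
Qed.

Lemma m_continuous_scal c (g : X -> R) : m_continuous d g -> m_continuous d (fun y => c * g y).
Proof.
  intros Hg x e He.
  destruct (Hg x (e / (Rabs c + 1))) as [del [Hdel Hnear]].
  { apply Rdiv_lt_0_compat; [easy|]. pose proof (Rabs_pos c). lra. }
  exists del. split; [easy|]. intros y Hy.
  rewrite <- Rmult_minus_distr_l, Rabs_mult.
  apply Rle_lt_trans with (Rabs c * (e / (Rabs c + 1))).
  - apply Rmult_le_compat_l; [apply Rabs_pos|]. now apply Rlt_le, Hnear.
  - apply (Rmult_lt_reg_r (Rabs c + 1)); [pose proof (Rabs_pos c); lra|].
    field_simplify; [lra|pose proof (Rabs_pos c); lra].
Qed.

Lemma continuity_pt_comp_lipschitz (g : X -> R) (gamma : R -> X) :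
  m_continuous d g -> (forall t1 t2, d (gamma t1) (gamma t2) <= Rabs (t1 - t2)) ->
  forall t, continuity_pt (fun u => g (gamma u)) t.
Proof.
  intros Hg Hlip t e He. destruct (Hg (gamma t) e He) as [del [Hdel Hnear]].
  exists del. split; [easy|]. intros u [_ Hu]. apply Hnear.
  eapply Rle_lt_trans; [apply Hlip|]. now rewrite Rabs_minus_sym.
Qed.

Lemma cauchy_in_compact_converges K (v : nat -> X) :
  m_compact d K -> (forall k, K (v k)) ->
  (forall e, 0 < e -> exists N, forall k l, (N <= k)%nat -> (N <= l)%nat -> d (v k) (v l) < e) ->
  exists p, converges v p.
Proof.
  intros HK HvK Hcauchy.
  destruct (compact_cluster_point K v (fun _ => True) HK) as [p Hp].
  - intros N. now exists N.
  - intros n _. apply HvK.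
  - exists p. intros e He. destruct (Hcauchy (e / 2)) as [N HN]; [lra|].
    destruct (Hp (e / 2) ltac:(lra) N) as [n [Hn [_ Hnp]]].
    exists N. intros k Hk. specialize (HN k n Hk Hn).
    pose proof (dist_triangle (v k) (v n) p). lra.
Qed.

Lemma lipschitz_of_limit (u : nat -> R -> X) (sigma : nat -> nat) (gamma : R -> X) :
  (forall n t1 t2, d (u n t1) (u n t2) <= Rabs (t1 - t2) + mesh n) ->
  (forall k, (k <= sigma k)%nat) -> (forall t, converges (fun k => u (sigma k) t) (gamma t)) ->
  forall t1 t2, d (gamma t1) (gamma t2) <= Rabs (t1 - t2).
Proof.
  intros Hlip Hsigma Hconv t1 t2. apply le_epsilon. intros e He.
  destruct (Hconv t1 (e / 3)) as [N1 HN1]; [lra|].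
  destruct (Hconv t2 (e / 3)) as [N2 HN2]; [lra|].
  destruct (mesh_small (e / 3)) as [N3 HN3]; [lra|].
  set (k := max N1 (max N2 N3)).
  specialize (HN1 k ltac:(lia)). specialize (HN2 k ltac:(lia)).
  pose proof (mesh_antitone N3 (sigma k) ltac:(specialize (Hsigma k); lia)).
  pose proof (Hlip (sigma k) t1 t2).
  pose proof (dist_triangle (gamma t1) (u (sigma k) t1) (gamma t2)).
  pose proof (dist_triangle (u (sigma k) t1) (u (sigma k) t2) (gamma t2)).
  rewrite dist_sym in HN1. lra.
Qed.

Section ProperSpace.
Hypothesis Hp : proper_metric d.

Lemma cball_compact z r : m_compact d (cball z r).
Proof. apply Hp; [now exists z, r|apply m_closed_cball]. Qed.

(* Arzela-Ascoli: a diagonal subsequence converges on the dense set [dense_seq],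
   hence, by equicontinuity up to [mesh n], it is Cauchy at every time. *)
Lemma asymptotically_lipschitz_limit (u : nat -> R -> X) (x0 : X) (rho : R -> R) :
  (forall n t1 t2, d (u n t1) (u n t2) <= Rabs (t1 - t2) + mesh n) ->
  (forall n t, d x0 (u n t) <= rho t) ->
  exists (sigma : nat -> nat) (gamma : R -> X), (forall k, (k <= sigma k)%nat) /\
    forall t, converges (fun k => u (sigma k) t) (gamma t).
Proof.
  intros Hlip Hbound.
  destruct (compact_diagonal_subsequence (fun m => cball x0 (rho (dense_seq m)))
    (fun m n => u n (dense_seq m))) as [sigma [Hsigma Hconv]].
  { intros m. apply cball_compact. }
  { intros m n. apply Hbound. }
  assert (Hcauchy : forall t e, 0 < e -> exists N, forall k l, (N <= k)%nat -> (N <= l)%nat ->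
      d (u (sigma k) t) (u (sigma l) t) < e).
  { intros t e He. destruct (dense_seq_dense t (e / 6)) as [m Hq]; [lra|].
    destruct (Hconv m) as [p Hlim]. destruct (Hlim (e / 6)) as [N1 HN1]; [lra|].
    destruct (mesh_small (e / 6)) as [N2 HN2]; [lra|].
    set (q := dense_seq m) in *.
    exists (max N1 N2). intros k l Hk Hl.
    pose proof (Hlip (sigma k) t q). pose proof (Hlip (sigma l) q t).
    pose proof (HN1 k ltac:(lia)). pose proof (HN1 l ltac:(lia)).
    pose proof (mesh_antitone N2 (sigma k) ltac:(specialize (Hsigma k); lia)).
    pose proof (mesh_antitone N2 (sigma l) ltac:(specialize (Hsigma l); lia)).
    pose proof (dist_triangle (u (sigma k) t) (u (sigma k) q) (u (sigma l) t)).
    pose proof (dist_triangle (u (sigma k) q) p (u (sigma l) t)).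
    pose proof (dist_triangle p (u (sigma l) q) (u (sigma l) t)).
    cbv beta in *. rewrite (dist_sym p (u (sigma l) q)) in *.
    rewrite (Rabs_minus_sym t q) in *. lra. }
  assert (Hlim : forall t, {p | converges (fun k => u (sigma k) t) p}).
  { intros t. apply constructive_indefinite_description.
    apply (cauchy_in_compact_converges (cball x0 (rho t))).
    - apply cball_compact.
    - intros k. apply Hbound.
    - now apply Hcauchy. }
  exists sigma, (fun t => proj1_sig (Hlim t)). split; [easy|].
  intros t. apply (proj2_sig (Hlim t)).
Qed.

Section SlopeDescent.
Variables f s : X -> R.
Hypothesis Hf : m_continuous d f.
Hypothesis Hsl : forall x, is_local_slope d f x (Finite (s x)).
Hypothesis Hs : m_continuous d s.

Definition slope_ratios (z : X) (del : R) : R -> Prop :=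
  fun v => exists y, 0 < d z y < del /\ v = Rmax (f z - f y) 0 / d z y.

Lemma local_slope_cases z :
  (m_isolated d z /\ s z = 0) \/ (~ m_isolated d z /\ slope_limsup d f z = Finite (s z)).
Proof.
  destruct (Hsl z) as [[Hz E]|[Hz E]]; [left|right]; split; [easy|now injection E|easy|easy].
Qed.

Lemma slope_ratio_le_lub z del y :
  0 < d z y < del -> Rbar_le (Rmax (f z - f y) 0 / d z y) (Lub_Rbar (slope_ratios z del)).
Proof. intros Hy. apply (proj1 (Lub_Rbar_correct (slope_ratios z del))). now exists y. Qed.

Lemma slope_limsup_le_lub z l :
  slope_limsup d f z = Finite l -> forall del, 0 < del -> Rbar_le l (Lub_Rbar (slope_ratios z del)).
Proof.
  unfold slope_limsup, Rbar_glb. destruct (Rbar_ex_glb _) as [g Hg]. simpl. destruct Hg as [Hlow _].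
  intros -> del Hdel. apply Hlow. now exists del.
Qed.

Lemma slope_limsup_approx z l :
  slope_limsup d f z = Finite l -> forall e, 0 < e ->
  exists del, 0 < del /\ Rbar_lt (Lub_Rbar (slope_ratios z del)) (l + e).
Proof.
  unfold slope_limsup, Rbar_glb. destruct (Rbar_ex_glb _) as [g Hg]. simpl.
  destruct Hg as [_ Hgreatest].
  intros -> e He. apply NNPP. intros Hno.
  enough (Rbar_le (l + e) l) by (simpl in *; lra).
  apply Hgreatest. intros L [del [Hdel ->]].
  apply Rbar_not_lt_le. intros Hlt. apply Hno. now exists del.
Qed.

Lemma local_slope_nonneg z : 0 <= s z.
Proof.
  destruct (local_slope_cases z) as [[_ ->]|[Hz E]]; [lra|].
  apply Rnot_lt_le. intros Hneg.
  destruct (slope_limsup_approx z (s z) E (- s z)) as [del [Hdel Hlub]]; [lra|].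
  destruct (not_isolated_near z Hz del Hdel) as [y Hy].
  pose proof (Rbar_le_lt_trans _ _ _ (slope_ratio_le_lub z del y Hy) Hlub) as Hratio.
  simpl in Hratio.
  assert (0 <= Rmax (f z - f y) 0 / d z y) by (apply Rdiv_le_0_compat; [apply Rmax_r|lra]).
  lra.
Qed.

Lemma local_slope_upper z e :
  0 < e -> exists del, 0 < del /\ forall y, d z y < del -> f z - f y <= (s z + e) * d z y.
Proof.
  intros He. destruct (local_slope_cases z) as [[[del [Hdel Hiso]] _]|[_ E]].
  { exists del. split; [easy|]. intros y Hy. rewrite (Hiso y Hy), dist_refl. lra. }
  destruct (slope_limsup_approx z (s z) E e He) as [del [Hdel Hlub]].
  exists del. split; [easy|]. intros y Hy.
  destruct (Rle_lt_or_eq_dec _ _ (dist_nonneg z y)) as [Hpos|Hzero].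
  - pose proof (Rbar_le_lt_trans _ _ _ (slope_ratio_le_lub z del y (conj Hpos Hy)) Hlub)
      as Hratio.
    simpl in Hratio. apply (Rmult_lt_compat_r (d z y)) in Hratio; [|easy].
    unfold Rdiv in Hratio. rewrite Rmult_assoc, Rinv_l in Hratio by lra.
    pose proof (Rmax_l (f z - f y) 0). lra.
  - apply eq_sym, dist_eq in Hzero. subst y. rewrite dist_refl. lra.
Qed.

Lemma local_slope_witness z b :
  0 <= b < s z -> forall del, 0 < del -> exists y, 0 < d z y < del /\ b * d z y < f z - f y.
Proof.
  intros Hb del Hdel. destruct (local_slope_cases z) as [[_ Hs0]|[_ E]]; [lra|].
  assert (Hbig : exists v, slope_ratios z del v /\ b < v).
  { apply NNPP. intros Hno.
    assert (Hlub : Rbar_le (Lub_Rbar (slope_ratios z del)) b).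
    { apply (proj2 (Lub_Rbar_correct _)). intros v Hv. simpl.
      apply Rnot_lt_le. intros Hbv. apply Hno. now exists v. }
    pose proof (Rbar_le_trans _ _ _ (slope_limsup_le_lub z (s z) E del Hdel) Hlub).
    simpl in *. lra. }
  destruct Hbig as [v [[y [Hy ->]] Hbv]]. exists y. split; [easy|].
  apply (Rmult_lt_compat_r (d z y)) in Hbv; [|lra].
  unfold Rdiv in Hbv. rewrite Rmult_assoc, Rinv_l, Rmult_1_r in Hbv by lra.
  unfold Rmax in Hbv. destruct (Rle_dec (f z - f y) 0); [|lra].
  assert (0 <= b * d z y) by (apply Rmult_le_pos; lra). lra.
Qed.

(* A minimiser [q] of [f + a d(z, .)] on the ball cannot lie inside it: there the slope
   exceeds [a], so [f] would drop faster than the penalty grows.  Hence [d z q = h]. *)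
Lemma descent_on_ball z h a :
  0 < a -> 0 <= h -> (forall y, d z y <= h -> a < s y) ->
  exists q, d z q <= h /\ a * h <= f z - f q.
Proof.
  intros Ha Hh Hslope.
  destruct (compact_attains_min (cball z h) (fun y => f y + a * d z y) z) as [q [Hq Hmin]].
  - apply cball_compact.
  - unfold cball. now rewrite dist_refl.
  - apply m_continuous_plus; [easy|]. apply m_continuous_scal, m_continuous_dist.
  - unfold cball in Hq, Hmin.
    assert (Hrim : h <= d z q).
    { apply Rnot_lt_le. intros Hin.
      destruct (local_slope_witness q a ltac:(split; [lra|now apply Hslope]) (h - d z q))
        as [y [Hy Hdrop]]; [lra|].
      pose proof (dist_triangle z q y).
      specialize (Hmin y ltac:(lra)).
      assert (a * d z y <= a * (d z q + d q y)) by (apply Rmult_le_compat_l; lra). lra. }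
    exists q. split; [easy|]. specialize (Hmin z ltac:(rewrite dist_refl; lra)).
    rewrite dist_refl in Hmin.
    assert (a * h <= a * d z q) by (apply Rmult_le_compat_l; lra). lra.
Qed.

Definition best_step (h : R) (z : X) : X :=
  epsilon (inhabits z) (fun q => d z q <= h /\ forall y, d z y <= h -> f q <= f y).

Lemma best_step_spec h z :
  0 <= h -> d z (best_step h z) <= h /\ forall y, d z y <= h -> f (best_step h z) <= f y.
Proof.
  intros Hh. unfold best_step. apply epsilon_spec.
  destruct (compact_attains_min (cball z h) f z) as [q Hq]; [apply cball_compact| |easy|].
  - unfold cball. now rewrite dist_refl.
  - now exists q.
Qed.

Section MinimizingMovement.
Variable x0 : X.

Fixpoint min_chain (h : R) (n : nat) : X :=
  match n with O => x0 | S n => best_step h (min_chain h n) end.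

Lemma min_chain_dist h j k : 0 <= h -> d (min_chain h j) (min_chain h (j + k)) <= INR k * h.
Proof.
  intros Hh. induction k as [|k IH].
  - rewrite Nat.add_0_r, dist_refl. simpl. lra.
  - rewrite Nat.add_succ_r, S_INR. simpl min_chain.
    pose proof (proj1 (best_step_spec h (min_chain h (j + k)) Hh)).
    pose proof (dist_triangle (min_chain h j) (min_chain h (j + k))
      (best_step h (min_chain h (j + k)))). lra.
Qed.

Lemma min_chain_f_nonincreasing h j k : 0 <= h -> f (min_chain h (j + k)) <= f (min_chain h j).
Proof.
  intros Hh. induction k as [|k IH]; [rewrite Nat.add_0_r; lra|].
  rewrite Nat.add_succ_r. simpl min_chain.
  pose proof (proj2 (best_step_spec h (min_chain h (j + k)) Hh) (min_chain h (j + k)))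
    as Hmin.
  rewrite dist_refl in Hmin. specialize (Hmin Hh). lra.
Qed.

Lemma min_chain_descent h j k a : 0 <= h -> 0 < a ->
  (forall i, (i < k)%nat -> forall y, d (min_chain h (j + i)) y <= h -> a < s y) ->
  INR k * a * h <= f (min_chain h j) - f (min_chain h (j + k)).
Proof.
  intros Hh Ha. induction k as [|k IH]; intros Hslope.
  - rewrite Nat.add_0_r. simpl. lra.
  - rewrite Nat.add_succ_r, S_INR. simpl min_chain.
    specialize (IH (fun i Hi => Hslope i ltac:(lia))).
    destruct (descent_on_ball (min_chain h (j + k)) h a Ha Hh (Hslope k ltac:(lia)))
      as [q [Hq Hdrop]].
    pose proof (proj2 (best_step_spec h (min_chain h (j + k)) Hh) q Hq). lra.
Qed.

Definition discrete_curve (n : nat) (t : R) : X :=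
  min_chain (mesh n) (grid_index (mesh n) t).

Lemma discrete_curve_lipschitz n t1 t2 :
  d (discrete_curve n t1) (discrete_curve n t2) <= Rabs (t1 - t2) + mesh n.
Proof.
  pose proof (mesh_pos n).
  assert (Hle : forall a b, a <= b ->
      d (discrete_curve n a) (discrete_curve n b) <= Rabs (a - b) + mesh n).
  { intros a b Hab. destruct (grid_index_diff (mesh n) a b) as [Hidx [Hgap _]]; [easy..|].
    unfold discrete_curve.
    replace (grid_index (mesh n) b)
      with (grid_index (mesh n) a + (grid_index (mesh n) b - grid_index (mesh n) a))%nat
      by lia.
    eapply Rle_trans; [apply min_chain_dist; lra|].
    rewrite minus_INR, Rabs_left1 by (easy || lra). lra. }
  destruct (Rle_dec t1 t2); [now apply Hle|].
  rewrite dist_sym, Rabs_minus_sym. apply Hle. lra.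
Qed.

Lemma discrete_curve_start n : discrete_curve n 0 = x0.
Proof. unfold discrete_curve. rewrite grid_index_nonpos; [easy|apply mesh_pos|lra]. Qed.

Lemma discrete_curve_dist_start n t : d x0 (discrete_curve n t) <= Rabs t + 1.
Proof.
  rewrite <- (discrete_curve_start n) at 1.
  pose proof (discrete_curve_lipschitz n 0 t) as Hlip.
  pose proof (mesh_antitone 0 n (Nat.le_0_l n)) as Hmesh.
  unfold mesh at 2 in Hmesh. rewrite INR_1, Rinv_1 in Hmesh.
  rewrite Rminus_0_l, Rabs_Ropp in Hlip. lra.
Qed.

Lemma discrete_curve_f_nonincreasing n t1 t2 :
  t1 <= t2 -> f (discrete_curve n t2) <= f (discrete_curve n t1).
Proof.
  intros Ht. pose proof (mesh_pos n).
  destruct (grid_index_diff (mesh n) t1 t2) as [Hidx _]; [easy..|].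
  unfold discrete_curve.
  replace (grid_index (mesh n) t2)
    with (grid_index (mesh n) t1 + (grid_index (mesh n) t2 - grid_index (mesh n) t1))%nat
    by lia.
  apply min_chain_f_nonincreasing. lra.
Qed.

Lemma discrete_curve_descent n t1 t2 a : 0 < a -> 0 <= t1 <= t2 ->
  (forall y, d (discrete_curve n t1) y <= t2 - t1 + 2 * mesh n -> a < s y) ->
  a * (t2 - t1 - mesh n) <= f (discrete_curve n t1) - f (discrete_curve n t2).
Proof.
  intros Ha Ht Hslope. pose proof (mesh_pos n).
  destruct (grid_index_diff (mesh n) t1 t2) as [Hidx [Hgap Hgap']]; [easy..|].
  specialize (Hgap' (proj1 Ht)).
  unfold discrete_curve in *. set (j := grid_index (mesh n) t1) in *.
  set (k := (grid_index (mesh n) t2 - j)%nat).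
  assert (Hk : INR k = INR (grid_index (mesh n) t2) - INR j) by now apply minus_INR.
  rewrite <- Hk in Hgap, Hgap'.
  replace (grid_index (mesh n) t2) with (j + k)%nat by (unfold k; lia).
  assert (Hdrop : INR k * a * mesh n <= f (min_chain (mesh n) j) - f (min_chain (mesh n) (j + k))).
  { apply min_chain_descent; [lra|easy|]. intros i Hi y Hy. apply Hslope.
    pose proof (min_chain_dist (mesh n) j i ltac:(lra)).
    pose proof (dist_triangle (min_chain (mesh n) j) (min_chain (mesh n) (j + i)) y).
    assert (Hik : INR (S i) <= INR k) by (apply le_INR; lia). rewrite S_INR in Hik.
    assert ((INR i + 1) * mesh n <= INR k * mesh n) by (apply Rmult_le_compat_r; lra). lra. }
  assert (a * (t2 - t1 - mesh n) <= a * (INR k * mesh n)) by (apply Rmult_le_compat_l; lra).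
  lra.
Qed.

Section LimitCurve.
Variables (sigma : nat -> nat) (gamma : R -> X).
Hypothesis sigma_ge : forall k, (k <= sigma k)%nat.
Hypothesis gamma_limit : forall t, converges (fun k => discrete_curve (sigma k) t) (gamma t).

Lemma limit_curve_approx t e : 0 < e -> exists N, forall k, (N <= k)%nat ->
  d (gamma t) (discrete_curve (sigma k) t) < e /\
  Rabs (f (discrete_curve (sigma k) t) - f (gamma t)) < e /\ mesh (sigma k) < e.
Proof.
  intros He. destruct (Hf (gamma t) e He) as [del [Hdel Hfnear]].
  destruct (gamma_limit t (Rmin e del)) as [N1 HN1]; [now apply Rmin_pos|].
  destruct (mesh_small e He) as [N2 HN2].
  exists (max N1 N2). intros k Hk. specialize (HN1 k ltac:(lia)). rewrite dist_sym in HN1.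
  pose proof (Rmin_l e del). pose proof (Rmin_r e del).
  pose proof (mesh_antitone N2 (sigma k) ltac:(specialize (sigma_ge k); lia)).
  split; [lra|split; [apply Hfnear; lra|lra]].
Qed.

Lemma limit_curve_start : gamma 0 = x0.
Proof.
  apply eq_sym, dist_eq, Rle_antisym; [|apply dist_nonneg].
  apply Rle_plus_epsilon. intros e He.
  destruct (limit_curve_approx 0 e He) as [N HN]. destruct (HN N (le_n N)) as [Hnear _].
  rewrite discrete_curve_start, dist_sym in Hnear. lra.
Qed.

Lemma limit_curve_lipschitz t1 t2 : d (gamma t1) (gamma t2) <= Rabs (t1 - t2).
Proof. exact (lipschitz_of_limit _ _ _ discrete_curve_lipschitz sigma_ge gamma_limit t1 t2). Qed.

Lemma limit_curve_f_nonincreasing t1 t2 : t1 <= t2 -> f (gamma t2) <= f (gamma t1).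
Proof.
  intros Ht. apply Rle_plus_epsilon. intros e He.
  destruct (limit_curve_approx t1 (e / 2)) as [N1 HN1]; [lra|].
  destruct (limit_curve_approx t2 (e / 2)) as [N2 HN2]; [lra|].
  destruct (HN1 (max N1 N2) ltac:(lia)) as [_ [Hf1 _]].
  destruct (HN2 (max N1 N2) ltac:(lia)) as [_ [Hf2 _]].
  pose proof (discrete_curve_f_nonincreasing (sigma (max N1 N2)) t1 t2 Ht).
  apply Rabs_def2 in Hf1, Hf2. lra.
Qed.

(* The discrete curves descend at rate [a] while they stay in the ball; they do for
   large [k] since [tau + 2 mesh] and the distance to [gamma u] are small against [rho]. *)
Lemma limit_curve_descent_on_ball u a rho tau :
  0 <= u -> 0 < a -> (forall y, d (gamma u) y < rho -> a < s y) -> 0 < tau < rho / 2 ->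
  a * tau <= f (gamma u) - f (gamma (u + tau)).
Proof.
  intros Hu Ha Hslope Htau. apply Rle_plus_epsilon. intros eta Heta.
  set (e := Rmin (rho / 8) (eta / (3 * (a + 1)))).
  assert (He : 0 < e) by (apply Rmin_pos; [lra|apply Rdiv_lt_0_compat; lra]).
  assert (Herho : e <= rho / 8) by apply Rmin_l.
  assert (Heeta : (a + 2) * e <= eta).
  { assert (e * (3 * (a + 1)) <= eta).
    { apply (Rmult_le_reg_r (/ (3 * (a + 1)))); [apply Rinv_0_lt_compat; lra|].
      rewrite Rmult_assoc, Rinv_r, Rmult_1_r by lra. apply Rmin_r. }
    nra. }
  destruct (limit_curve_approx u e He) as [N1 HN1].
  destruct (limit_curve_approx (u + tau) e He) as [N2 HN2].
  destruct (HN1 (max N1 N2) ltac:(lia)) as [Hnear [Hfu Hmesh]].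
  destruct (HN2 (max N1 N2) ltac:(lia)) as [_ [Hfut _]].
  set (n := sigma (max N1 N2)) in *.
  assert (Hdisc : a * (u + tau - u - mesh n) <=
      f (discrete_curve n u) - f (discrete_curve n (u + tau))).
  { apply discrete_curve_descent; [easy|lra|]. intros y Hy. apply Hslope.
    pose proof (dist_triangle (gamma u) (discrete_curve n u) y). lra. }
  apply Rabs_def2 in Hfu, Hfut.
  assert (a * mesh n <= a * e) by (apply Rmult_le_compat_l; lra). lra.
Qed.

Lemma limit_curve_descent_rate u e : 0 <= u -> 0 < e -> exists del, 0 < del /\
  forall tau, 0 < tau < del -> (s (gamma u) - e) * tau <= f (gamma u) - f (gamma (u + tau)).
Proof.
  intros Hu He. set (a := s (gamma u) - e / 2).
  destruct (Rle_dec a 0) as [Ha|Ha].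
  - exists 1. split; [lra|]. intros tau Htau.
    pose proof (limit_curve_f_nonincreasing u (u + tau) ltac:(lra)).
    assert ((s (gamma u) - e) * tau <= 0) by (apply Rmult_le_0_r; unfold a in Ha; lra). lra.
  - destruct (Hs (gamma u) (e / 2)) as [rho [Hrho Hsnear]]; [lra|].
    exists (rho / 2). split; [lra|]. intros tau Htau.
    assert (a * tau <= f (gamma u) - f (gamma (u + tau))).
    { apply (limit_curve_descent_on_ball u a rho tau Hu); [lra| |easy].
      intros y Hy. specialize (Hsnear y Hy). apply Rabs_def2 in Hsnear. unfold a. lra. }
    assert ((s (gamma u) - e) * tau <= a * tau) by (apply Rmult_le_compat_r; unfold a; lra).
    lra.
Qed.

Lemma limit_curve_slope_rate u e : 0 < e -> exists del, 0 < del /\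
  forall tau, 0 < tau < del -> f (gamma u) - f (gamma (u + tau)) <= (s (gamma u) + e) * tau.
Proof.
  intros He. destruct (local_slope_upper (gamma u) e He) as [del [Hdel Hup]].
  exists del. split; [easy|]. intros tau Htau.
  pose proof (limit_curve_lipschitz u (u + tau)) as Hlip.
  replace (u - (u + tau)) with (- tau) in Hlip by ring.
  rewrite Rabs_Ropp, Rabs_pos_eq in Hlip by lra.
  specialize (Hup (gamma (u + tau)) ltac:(lra)).
  pose proof (local_slope_nonneg (gamma u)).
  assert ((s (gamma u) + e) * d (gamma u) (gamma (u + tau)) <= (s (gamma u) + e) * tau)
    by (apply Rmult_le_compat_l; lra).
  lra.
Qed.

Lemma limit_curve_right_derivative u :
  0 <= u -> is_right_derivative (fun t => f (gamma t)) u (- s (gamma u)).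
Proof.
  intros Hu e He.
  destruct (limit_curve_descent_rate u e Hu He) as [d1 [Hd1 Hlow]].
  destruct (limit_curve_slope_rate u e He) as [d2 [Hd2 Hup]].
  exists (Rmin d1 d2). split; [now apply Rmin_pos|]. intros tau Htau.
  pose proof (Rmin_l d1 d2). pose proof (Rmin_r d1 d2).
  specialize (Hlow tau ltac:(lra)). specialize (Hup tau ltac:(lra)).
  apply Rabs_le. lra.
Qed.

End LimitCurve.

Lemma exists_slope_descent_curve : exists gamma : R -> X,
  (forall t1 t2, d (gamma t1) (gamma t2) <= Rabs (t1 - t2)) /\ gamma 0 = x0 /\
  forall u, 0 <= u -> is_right_derivative (fun t => f (gamma t)) u (- s (gamma u)).
Proof.
  destruct (asymptotically_lipschitz_limit discrete_curve x0 (fun t => Rabs t + 1)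
    discrete_curve_lipschitz discrete_curve_dist_start) as [sigma [gamma [Hsigma Hlim]]].
  exists gamma. split; [|split].
  - exact (limit_curve_lipschitz sigma gamma Hsigma Hlim).
  - exact (limit_curve_start sigma gamma Hsigma Hlim).
  - exact (limit_curve_right_derivative sigma gamma Hsigma Hlim).
Qed.

End MinimizingMovement.
End SlopeDescent.
End ProperSpace.
End MetricSpace.

Theorem corollary3p6 (X : Type) (d : X -> X -> R) (f : X -> R) (s : X -> R) :
  is_metric d ->
  proper_metric d ->
  m_continuous d f ->
  (forall x, is_local_slope d f x (Finite (s x))) ->
  m_continuous d s ->
  forall x : X, s x <> 0 ->
    exists (T : R) (gamma : R -> X),
      0 < T /\
      (forall t1 t2, 0 <= t1 <= T -> 0 <= t2 <= T ->
         d (gamma t1) (gamma t2) <= Rabs (t1 - t2)) /\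
      gamma 0 = x /\
      (forall t, 0 <= t <= T ->
         f (gamma t) = f x - RInt (fun u => s (gamma u)) 0 t).
Proof.
  (* The construction does not need [s x <> 0]. *)
  intros Hm Hp Hf Hsl Hs x _.
  destruct (exists_slope_descent_curve d Hm Hp f s Hf Hsl Hs x)
    as [gamma [Hlip [Hstart Hder]]].
  exists 1, gamma. split; [lra|]. split; [intros t1 t2 _ _; apply Hlip|]. split; [easy|].
  intros t Ht.
  assert (E : - f (gamma t) = - f (gamma 0) + RInt (fun u => s (gamma u)) 0 t).
  { apply (RInt_of_right_derivative (fun u => - f (gamma u))); [lra| | |].
    - intros v _. apply continuity_pt_opp. now apply (continuity_pt_comp_lipschitz d).
    - now apply (continuity_pt_comp_lipschitz d).
    - intros u Hu. rewrite <- (Ropp_involutive (s (gamma u))).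
      apply right_derivative_opp, Hder. lra. }
  rewrite Hstart in E. lra.
Qed.
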